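(* Assume the common support, overlap and unconfoundedness assumptions, and assume there is a known $\bar p$ such that $p_0\in[0,\bar p]$. Under Design 1, for all $x\in\mathcal X$, $\min\{\Gamma(x,0),\Gamma(x,\bar p)\}\le\theta(x)\le\max\{\Gamma(x,0),\Gamma(x,\bar p)\}$, and these bounds are sharp (they are the best possible bounds on $\theta(x)$ given the distribution of $(Y,T,X)$ and the stated assumptions).
   Context: Population variables: $Y^*\in\{0,1\}$ (outcome), $T^*\in\{0,1\}$ (treatment), $X^*$ (covariate vector). Potential outcomes $Y^*(1),Y^*(0)\in\{0,1\}$ satisfy $Y^*=T^*Y^*(1)+(1-T^* )Y^*(0)$. Let $p_0:=\Pr(Y^*=1)$. The observed vector $(Y,T,X)$ arises from Bernoulli sampling: $Y\in\{0,1\}$ is drawn with known probability $h_0:=\Pr(Y=1)\in(0,1)$, and given $Y=y$, $(T,X)$ is drawn from a distribution $\mathcal P_y$. Densities (or mass functions) are denoted by $f$. Design 1 (case-control): for all $t\in\{0,1\}$, $x\in\mathcal X$, $y\in\{0,1\}$, $f_{X|Y}(x\mid y)=f_{X^*|Y^*}(x\mid y)$ and $\Pr(T=t\mid X=x,Y=y)=\Pr(T^*=t\mid X^*=x,Y^*=y)$. Common support assumption: the support of $X^*$ and that of $X$ given $Y=y$ for $y=0,1$ coincide; call it $\mathcal X$. Let $\Pi(t\mid y,x):=\Pr(T=t\mid Y=y,X=x)$, assumed nonzero for all $t,y$. For $p\in[0,1]$, under Design 1, $r(x,p):=\frac{p(1-h_0)\Pr(Y=1\mid X=x)}{p(1-h_0)\Pr(Y=1\mid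 X=x)+h_0(1-p)\Pr(Y=0\mid X=x)}$. Define $\Gamma(x,p):=\frac{\Pi(1\mid 1,x)}{\Pi(0\mid 1,x)}\cdot\frac{\Pi(0\mid 0,x)+r(x,p)\{\Pi(0\mid 1,x)-\Pi(0\mid 0,x)\}}{\Pi(1\mid 0,x)+r(x,p)\{\Pi(1\mid 1,x)-\Pi(1\mid 0,x)\}}$. Causal relative risk: $\theta(x):=\Pr\{Y^*(1)=1\mid X^*=x\}/\Pr\{Y^*(0)=1\mid X^*=x\}$. Overlap: for all $(t,x)\in\{0,1\}\times\mathcal X$, $0<\Pr\{Y^*(t)=1\mid X^*=x\}<1$ and $0<\Pr(T^*=1\mid X^*=x)<1$. Unconfoundedness: for all $t,x$, $\Pr\{Y^*(t)=1\mid T^*=1,X^*=x\}=\Pr\{Y^*(t)=1\mid T^*=0,X^*=x\}$. *)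

From HB Require Import structures.
From mathcomp Require Import all_boot all_order all_algebra.
From mathcomp Require Import all_classical all_reals all_analysis.

Set Implicit Arguments.
Unset Strict Implicit.
Unset Printing Implicit Defensive.

Import Order.TTheory GRing.Theory Num.Theory.
Local Open Scope classical_set_scope.
Local Open Scope ring_scope.

(* Binary variables are encoded by bool: true = 1, false = 0. *)

(* Population: joint law of (Y'(1), Y'(0), T', X'), given by a density  *)
(* fX of X' w.r.t. a base measure mu on X, and for each x the           *)
(* conditional pmf  q x y1 y0 t = Pr(Y'(1)=y1, Y'(0)=y0, T'=t | X'=x).  *)
Record population (X : Type) (R : realType) := Population {
  fX : X -> R ;
  q  : X -> bool -> bool -> bool -> R }.

Section Pop.
Context {d : measure_display} {X : measurableType d} {R : realType}.
Variable mu : {measure set X -> \bar R}.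
Variable P : population X R.

Definition ystar (y1 y0 t : bool) : bool := if t then y1 else y0.

Definition pr_x (x : X) (E : bool -> bool -> bool -> bool) : R :=
  \sum_(y1 : bool) \sum_(y0 : bool) \sum_(t : bool)
     (if E y1 y0 t then q P x y1 y0 t else 0).

Definition prPO (t : bool) (x : X) : R :=
  pr_x x (fun y1 y0 _ => if t then y1 else y0).

Definition prT1 (x : X) : R := pr_x x (fun _ _ t => t).

Definition prY (y : bool) (x : X) : R :=
  pr_x x (fun y1 y0 t => ystar y1 y0 t == y).

Definition prTY (t y : bool) (x : X) : R :=
  pr_x x (fun y1 y0 t' => (t' == t) && (ystar y1 y0 t' == y)).

Definition prPO_T (t s : bool) (x : X) : R :=
  pr_x x (fun y1 y0 t' => (t' == s) && (if t then y1 else y0))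
  / pr_x x (fun _ _ t' => t' == s).

Definition p0 : R := fine (\int[mu]_x (fX P x * prY true x)%:E)%E.

Definition prYmarg (y : bool) : R := if y then p0 else 1 - p0.

Definition fX_Y (y : bool) (x : X) : R := fX P x * prY y x / prYmarg y.

Definition prT_XY (t y : bool) (x : X) : R := prTY t y x / prY y x.

Definition theta (x : X) : R := prPO true x / prPO false x.

Definition valid_pop : Prop :=
  measurable_fun setT (fX P) /\
  (forall x, 0 <= fX P x) /\
  (\int[mu]_x (fX P x)%:E)%E = 1%E /\
  (forall y1 y0 t, measurable_fun setT (fun x => q P x y1 y0 t)) /\
  (forall x y1 y0 t, 0 <= q P x y1 y0 t) /\
  (forall x, \sum_(y1 : bool) \sum_(y0 : bool) \sum_(t : bool)
                   q P x y1 y0 t = 1).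

End Pop.

Definition supp {X : Type} {R : realType} (f : X -> R) : set X :=
  [set x | 0 < f x].

Section Assumptions.
Context {d : measure_display} {X : measurableType d} {R : realType}.
Variable mu : {measure set X -> \bar R}.
(* observed data: fXY y = density of X given Y = y (w.r.t. mu),
   Pi t y x = Pi(t | y, x) = Pr(T = t | Y = y, X = x) *)
Variables (fXY : bool -> X -> R) (Pi : bool -> bool -> X -> R).
Variable P : population X R.

(* common support; the common support is  supp (fX P)  (called \mathcal X) *)
Definition common_support : Prop :=
  supp (fX P) = supp (fXY true) /\ supp (fX P) = supp (fXY false).

Definition overlap : Prop :=
  forall t x, supp (fX P) x ->
    (0 < prPO P t x < 1) /\ (0 < prT1 P x < 1).

Definition unconfoundedness : Prop :=
  forall t x, supp (fX P) x -> prPO_T P t true x = prPO_T P t false x.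

Definition design1 : Prop :=
  forall t x y, supp (fX P) x ->
    fXY y x = fX_Y mu P y x /\ Pi t y x = prT_XY P t y x.
End Assumptions.

Section Bounds.
Context {X : Type} {R : realType}.
Variables (h0 : R) (fXY : bool -> X -> R) (Pi : bool -> bool -> X -> R).

(* Pr(Y = y | X = x) under Bernoulli sampling *)
Definition prY1_obs (x : X) : R :=
  h0 * fXY true x / (h0 * fXY true x + (1 - h0) * fXY false x).
Definition prY0_obs (x : X) : R :=
  (1 - h0) * fXY false x / (h0 * fXY true x + (1 - h0) * fXY false x).

Definition r (x : X) (p : R) : R :=
  p * (1 - h0) * prY1_obs x /
  (p * (1 - h0) * prY1_obs x + h0 * (1 - p) * prY0_obs x).

Definition Gamma (x : X) (p : R) : R :=
  Pi true true x / Pi false true x *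
  ((Pi false false x + r x p * (Pi false true x - Pi false false x)) /
   (Pi true false x + r x p * (Pi true true x - Pi true false x))).
End Bounds.

Definition admissible {d : measure_display} {X : measurableType d}
  {R : realType} (mu : {measure set X -> \bar R})
  (fXY : bool -> X -> R) (Pi : bool -> bool -> X -> R) (pbar : R)
  (P : population X R) : Prop :=
  valid_pop mu P /\ common_support fXY P /\ overlap P /\
  unconfoundedness P /\ design1 mu fXY Pi P /\ 0 <= p0 mu P <= pbar.

(* Under unconfoundedness, Design 1 identifies everything in the relative risk except the
   prevalence p0 = Pr(Y* = 1): conditionally on X = x the joint law of (T, Y) is proportional to
   Pi(t | y, x) w_y with (w_1, w_0) = (p0 f(x | 1), (1 - p0) f(x | 0)), and theta(x) is the
   resulting ratio. As a function of p0 it is a ratio of affine functions with a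
   positive denominator, hence monotone on [0, pbar], and its values at 0 and pbar are
   Gamma(x, 0) and Gamma(x, pbar). Conversely every s in (0, pbar) is the prevalence of an
   admissible population: mix the two class densities with weights s and 1 - s and, given X,
   draw T, Y*(1) and Y*(0) independently with the Bernoulli parameters that reproduce Pi. Its
   relative risk is the same ratio at s, so no bounds tighter than the endpoint values hold. *)

From HB Require Import structures.
From mathcomp Require Import all_boot all_order all_algebra.
From mathcomp Require Import all_classical all_reals all_analysis.
From mathcomp Require Import measurable_realfun.
From mathcomp Require Import ring lra.
Import Order.TTheory GRing.Theory Num.Theory.
Local Open Scope classical_set_scope.
Local Open Scope ring_scope.

Section LinearFractional.
Context {R : realFieldType}.

Lemma affine_ge0_left (a b c0 c1 : R) : a < b ->
  (forall s, a < s < b -> 0 <= c0 + c1 * s) -> 0 <= c0 + c1 * a.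
Proof.
move=> ab f_ge0; rewrite leNgt; apply/negP => fa_lt0.
set m := (a + b) / 2.
have am : a < m by rewrite /m; lra.
have mb : m < b by rewrite /m; lra.
have fm_ge0 : 0 <= c0 + c1 * m by apply: f_ge0; rewrite am mb.
set k := c1 * (m - a).
have k_gt0 : 0 < k by rewrite /k; lra.
(* at a + t (m - a) the function takes half of its negative value at a *)
set t := - (c0 + c1 * a) / (2 * k).
have t_gt0 : 0 < t by rewrite /t divr_gt0 //; lra.
have t_lt1 : t < 1 by rewrite /t ltr_pdivrMr; rewrite /k; lra.
have s_in : a < a + t * (m - a) < b.
  have am' : 0 < m - a by rewrite subr_gt0.
  have := mulr_gt0 t_gt0 am'.
  have : t * (m - a) < m - a by rewrite gtr_pMl // subr_gt0.
  lra.
have := f_ge0 _ s_in.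
have -> : c0 + c1 * (a + t * (m - a)) = c0 + c1 * a + t * k by rewrite /k; ring.
have -> : t * k = - (c0 + c1 * a) / 2 by rewrite /t; field; rewrite gt_eqF.
lra.
Qed.

Lemma affine_ge0_ends (a b c0 c1 : R) : a < b ->
  (forall s, a < s < b -> 0 <= c0 + c1 * s) -> 0 <= c0 + c1 * a /\ 0 <= c0 + c1 * b.
Proof.
move=> ab f_ge0; split; first exact: affine_ge0_left f_ge0.
rewrite -mulrNN; apply: (@affine_ge0_left (- b) (- a)); first by rewrite ltrN2.
by move=> s s_in; rewrite mulNr -mulrN; apply: f_ge0; rewrite ltrNr ltrNl andbC.
Qed.

Lemma between_of_mul_le0 (a b v : R) : (v - a) * (v - b) <= 0 ->
  Num.min a b <= v <= Num.max a b.
Proof. by move=> h; case: (leP a b) => hab; apply/andP; split; nra. Qed.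

Lemma convex_gt0 (a b p : R) : 0 < a -> 0 < b -> 0 <= p <= 1 -> 0 < p * a + (1 - p) * b.
Proof. by move=> a_gt0 b_gt0 /andP[p_ge0 p_le1]; nra. Qed.

Definition share (u v : R) : R := u / (u + v).

Lemma share_gt0_lt1 (u v : R) : 0 < u -> 0 < v -> 0 < share u v < 1.
Proof.
move=> u_gt0 v_gt0; rewrite /share divr_gt0 ?addr_gt0 //=.
by rewrite ltr_pdivrMr ?addr_gt0 // mul1r ltrDl.
Qed.

Lemma share_ge0_le1 (u v : R) : 0 <= u -> 0 <= v -> 0 <= share u v <= 1.
Proof.
move=> u_ge0 v_ge0; have [uv0|uv_neq0] := eqVneq (u + v) 0.
  by rewrite /share uv0 invr0 mulr0 lexx ler01.
have uv_gt0 : 0 < u + v by rewrite lt0r uv_neq0 addr_ge0.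
by rewrite /share divr_ge0 ?addr_ge0 //= ler_pdivrMr // mul1r lerDl.
Qed.

Lemma bernoulli_pmf_share (u v : R) b : u + v != 0 ->
  bernoulli_pmf (share u v) b = (if b then u else v) / (u + v).
Proof. by move=> uv_neq0; case: b; rewrite /bernoulli_pmf /share //; field. Qed.

Definition linfrac (n0 n1 d0 d1 s : R) : R := (n0 + n1 * s) / (d0 + d1 * s).

Variables (d0 d1 b : R).
Hypothesis den_gt0 : forall s, 0 <= s <= b -> 0 < d0 + d1 * s.

Lemma linfrac_between n0 n1 p : 0 <= p <= b ->
  Num.min (linfrac n0 n1 d0 d1 0) (linfrac n0 n1 d0 d1 b) <= linfrac n0 n1 d0 d1 p
    <= Num.max (linfrac n0 n1 d0 d1 0) (linfrac n0 n1 d0 d1 b).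
Proof.
move=> /andP[p_ge0 p_le_b]; set g := linfrac n0 n1 d0 d1; apply: between_of_mul_le0.
have b_ge0 : 0 <= b := le_trans p_ge0 p_le_b.
have D0 : 0 < d0 + d1 * 0 by apply: den_gt0; rewrite lexx.
have d0_gt0 : 0 < d0 by rewrite mulr0 addr0 in D0.
have Dp : 0 < d0 + d1 * p by apply: den_gt0; rewrite p_ge0.
have Db : 0 < d0 + d1 * b by apply: den_gt0; rewrite lexx andbT.
(* both differences have the sign of n1 d0 - n0 d1 *)
have -> : (g p - g 0) * (g p - g b) = p * (p - b) *
    ((n1 * d0 - n0 * d1) ^+ 2 / ((d0 + d1 * p) ^+ 2 * (d0 + d1 * 0) * (d0 + d1 * b))).
  by rewrite /g /linfrac; field; rewrite !gt_eqF.
apply: mulr_le0_ge0; first by apply: mulr_ge0_le0; rewrite ?subr_le0.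
by apply: divr_ge0; rewrite ?sqr_ge0 // !mulr_ge0 // ltW.
Qed.

Lemma linfrac_lower n0 n1 L : 0 < b ->
  (forall s, 0 < s < b -> L <= linfrac n0 n1 d0 d1 s) ->
  L <= linfrac n0 n1 d0 d1 0 /\ L <= linfrac n0 n1 d0 d1 b.
Proof.
move=> b_gt0 g_ge.
have D0 : 0 < d0 + d1 * 0 by apply: den_gt0; rewrite lexx ltW.
have Db : 0 < d0 + d1 * b by apply: den_gt0; rewrite lexx andbT ltW.
rewrite /linfrac !ler_pdivlMr //.
have [] := @affine_ge0_ends 0 b (n0 - L * d0) (n1 - L * d1) b_gt0; last by split; lra.
move=> s /[dup] /andP[s_gt0 s_lt_b] /g_ge; rewrite /linfrac ler_pdivlMr; first lra.
by apply: den_gt0; rewrite !ltW.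
Qed.

Lemma linfrac_closure n0 n1 L U : 0 < b ->
  (forall s, 0 < s < b -> L <= linfrac n0 n1 d0 d1 s <= U) ->
  L <= Num.min (linfrac n0 n1 d0 d1 0) (linfrac n0 n1 d0 d1 b) /\
  Num.max (linfrac n0 n1 d0 d1 0) (linfrac n0 n1 d0 d1 b) <= U.
Proof.
move=> b_gt0 g_in; set g := linfrac n0 n1 d0 d1.
have [lo0 lob] : L <= g 0 /\ L <= g b by apply: linfrac_lower => // s /g_in /andP[].
have gN s : - g s = linfrac (- n0) (- n1) d0 d1 s by rewrite /g /linfrac -mulNr opprD -!mulNr.
have [up0 upb] : - U <= - g 0 /\ - U <= - g b.
  by rewrite !gN; apply: linfrac_lower => // s /g_in /andP[_]; rewrite -gN lerN2.
by rewrite !lerN2 in up0 upb; rewrite le_min ge_max lo0 lob up0 upb.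
Qed.
End LinearFractional.

Lemma measurable_invr (R : realType) : measurable_fun [set: R] (GRing.inv : R -> R).
Proof.
have -> : (GRing.inv : R -> R) = fun x => if x == 0 then cst 0 x else x^-1.
  by apply: funext => x; case: eqP => // ->; rewrite invr0.
apply: measurable_fun_if => //; first exact: measurable_fun_eqr.
apply: (@measurable_funS _ _ _ _ [set x : R | x != 0]).
- by apply: open_measurable; exact: open_neq.
- by move=> x /= [_ ->].
- apply: open_continuous_measurable_fun; first exact: open_neq.
  by move=> x; rewrite inE => /inv_continuous.
Qed.

Section Measurability.
Context {d : measure_display} {X : measurableType d} {R : realType}.

Lemma measurable_funV (f : X -> R) :
  measurable_fun setT f -> measurable_fun setT (fun x => (f x)^-1).
Proof. exact: measurableT_comp (measurable_invr R). Qed.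

Lemma measurable_share (f g : X -> R) :
  measurable_fun setT f -> measurable_fun setT g ->
  measurable_fun setT (fun x => share (f x) (g x)).
Proof. by move=> mf mg; apply/measurable_funM/measurable_funV/measurable_funD. Qed.
End Measurability.

Section Population.
Context {d : measure_display} {X : measurableType d} {R : realType}.
Implicit Types (P : population X R) (x : X).

Lemma pr_x_ge0 P x E : (forall y1 y0 t, 0 <= q P x y1 y0 t) -> 0 <= pr_x P x E.
Proof. by move=> q_ge0; do 3 (apply: sumr_ge0 => ? _); case: ifP. Qed.

Lemma measurable_pr_x P E : (forall y1 y0 t, measurable_fun setT (fun x => q P x y1 y0 t)) ->
  measurable_fun setT (fun x => pr_x P x E).
Proof.
move=> mq; rewrite /pr_x; under eq_fun do rewrite !big_bool.
by repeat apply: measurable_funD; case: (E _ _ _).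
Qed.

Lemma prYmargE (mu : {measure set X -> \bar R}) P y :
  prYmarg mu P y = bernoulli_pmf (p0 mu P) y.
Proof. by []. Qed.

Lemma integral_scaled_density (mu : {measure set X -> \bar R}) (c : R) (f : X -> R) :
  0 <= c -> (forall x, 0 <= f x) -> measurable_fun setT f ->
  (\int[mu]_x (f x)%:E = 1)%E -> (\int[mu]_x (c * f x)%:E = c%:E)%E.
Proof.
move=> c_ge0 f_ge0 mf int_f; under eq_integral do rewrite EFinM.
rewrite ge0_integralZl_EFin ?int_f ?mule1 //; first by move=> x _; rewrite lee_fin.
exact: (measurable_EFinP _ _).2 mf.
Qed.

Lemma prY_split P y x : prY P y x = prTY P true y x + prTY P false y x.
Proof. by rewrite /prY /prTY /pr_x !big_bool; case: y => /=; ring. Qed.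

Section AtPoint.
Variables (P : population X R) (x : X).
Hypothesis q_mass1 : \sum_(y1 : bool) \sum_(y0 : bool) \sum_(t : bool) q P x y1 y0 t = 1.

Lemma prT_split t : bernoulli_pmf (prT1 P x) t = prTY P t true x + prTY P t false x.
Proof.
by move: q_mass1; rewrite /bernoulli_pmf /prT1 /prTY /pr_x !big_bool; case: t => /=; lra.
Qed.

Lemma prPO_unconfounded t : 0 < prT1 P x < 1 ->
  prPO_T P t true x = prPO_T P t false x ->
  prPO P t x = prTY P t true x / bernoulli_pmf (prT1 P x) t.
Proof.
move=> /andP[e_gt0 e_lt1].
pose k (u s : bool) := pr_x P x (fun y1 y0 t' => (t' == s) && (if u then y1 else y0)).
have w s : pr_x P x (fun _ _ t' => t' == s) = bernoulli_pmf (prT1 P x) s.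
  by move: q_mass1; rewrite /bernoulli_pmf /prT1 /pr_x !big_bool; case: s => /=; lra.
have -> : prPO P t x = k t true + k t false.
  by rewrite /k /prPO /pr_x !big_bool; case: t => /=; ring.
have -> : prTY P t true x = k t t.
  by rewrite /k /prTY /pr_x !big_bool; case: t => /=; ring.
rewrite /prPO_T !w /= => unconf.
have e_neq0 : prT1 P x != 0 by rewrite gt_eqF.
have e'_neq0 : 1 - prT1 P x != 0 by rewrite subr_eq0 gt_eqF.
have k_true : k t true = k t false / (1 - prT1 P x) * prT1 P x by rewrite -unconf divfK.
have k_false : k t false = k t true / prT1 P x * (1 - prT1 P x) by rewrite unconf divfK.
clear unconf; case: t k_true k_false => /= k_true k_false.
  by rewrite k_false; field.
by rewrite k_true; field.
Qed.
End AtPoint.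
End Population.

Section RelativeRisk.
Context {X : Type} {R : realType}.
Variables (fXY : bool -> X -> R) (Pi : bool -> bool -> X -> R) (x : X).

(* The relative risk Pr(Y*(1) = 1 | x) / Pr(Y*(0) = 1 | x) under unconfoundedness, when
   Pr(T = t, Y = y | X = x) is proportional to Pi(t | y, x) w_y. *)
Definition rr_weights (w1 w0 : R) : R :=
  Pi true true x * (Pi false true x * w1 + Pi false false x * w0) /
  (Pi false true x * (Pi true true x * w1 + Pi true false x * w0)).

Lemma rr_weights_linfrac (f1 f0 p : R) :
  rr_weights (p * f1) ((1 - p) * f0) =
  linfrac (Pi true true x * Pi false false x * f0)
          (Pi true true x * (Pi false true x * f1 - Pi false false x * f0))
          (Pi false true x * Pi true false x * f0)
          (Pi false true x * (Pi true true x * f1 - Pi true false x * f0)) p.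
Proof. by rewrite /rr_weights /linfrac; congr (_ / _); ring. Qed.

Hypotheses (fXY_gt0 : forall y, 0 < fXY y x) (Pi_gt0 : forall t y, 0 < Pi t y x).

Lemma arm_weight_gt0 t (p : R) : 0 <= p <= 1 ->
  0 < Pi t true x * (p * fXY true x) + Pi t false x * ((1 - p) * fXY false x).
Proof.
move=> p01; rewrite mulrCA [X in _ + X]mulrCA.
by apply: convex_gt0; rewrite // mulr_gt0.
Qed.

Lemma rr_weights_den_gt0 (p : R) : 0 <= p <= 1 ->
  0 < Pi false true x * Pi true false x * fXY false x +
      Pi false true x * (Pi true true x * fXY true x - Pi true false x * fXY false x) * p.
Proof.
move=> p01; rewrite (_ : _ + _ = Pi false true x *
  (Pi true true x * (p * fXY true x) + Pi true false x * ((1 - p) * fXY false x))); last by ring.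
by rewrite mulr_gt0 ?arm_weight_gt0.
Qed.

Lemma r_weights (h0 p : R) : 0 < h0 < 1 -> 0 <= p <= 1 ->
  r h0 fXY x p = p * fXY true x / (p * fXY true x + (1 - p) * fXY false x).
Proof.
move=> /andP[h0_gt0 h0_lt1] p01.
have S_gt0 : 0 < h0 * fXY true x + (1 - h0) * fXY false x.
  by apply: convex_gt0; rewrite ?ltW.
rewrite /r /prY1_obs /prY0_obs.
set c := h0 * (1 - h0) / (h0 * fXY true x + (1 - h0) * fXY false x).
have c_neq0 : c != 0 by rewrite /c gt_eqF // !mulr_gt0 ?invr_gt0 // subr_gt0.
rewrite (_ : p * _ * _ = c * (p * fXY true x)); last by rewrite /c; field; rewrite gt_eqF.
rewrite (_ : h0 * _ * _ = c * ((1 - p) * fXY false x)); last by rewrite /c; field; rewrite gt_eqF.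
by rewrite -mulrDr -mulf_div divff ?mul1r.
Qed.

Lemma Gamma_rr_weights (h0 p : R) : 0 < h0 < 1 -> 0 <= p <= 1 ->
  Gamma h0 fXY Pi x p = rr_weights (p * fXY true x) ((1 - p) * fXY false x).
Proof.
move=> h01 p01; have T_gt0 := arm_weight_gt0 true p p01.
have W_gt0 : 0 < p * fXY true x + (1 - p) * fXY false x by apply: convex_gt0.
by rewrite /Gamma r_weights // /rr_weights; field; rewrite !gt_eqF.
Qed.

Lemma Gamma_linfrac (h0 p : R) : 0 < h0 < 1 -> 0 <= p <= 1 ->
  Gamma h0 fXY Pi x p =
  linfrac (Pi true true x * Pi false false x * fXY false x)
          (Pi true true x * (Pi false true x * fXY true x - Pi false false x * fXY false x))
          (Pi false true x * Pi true false x * fXY false x)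
          (Pi false true x * (Pi true true x * fXY true x - Pi true false x * fXY false x)) p.
Proof. by move=> h01 p01; rewrite Gamma_rr_weights // rr_weights_linfrac. Qed.
End RelativeRisk.

Section Identification.
Context {d : measure_display} {X : measurableType d} {R : realType}.
Context {mu : {measure set X -> \bar R}} {fXY : bool -> X -> R} {Pi : bool -> bool -> X -> R}.
Context {P : population X R} {x : X}.
Hypotheses (design_x : forall t y, fXY y x = fX_Y mu P y x /\ Pi t y x = prT_XY P t y x)
           (fXY_gt0 : forall y, 0 < fXY y x).

Lemma design1_neq0 y :
  [/\ fX P x != 0, prY P y x != 0 & bernoulli_pmf (p0 mu P) y != 0].
Proof.
have := fXY_gt0 y; rewrite (design_x true y).1 /fX_Y => /gt_eqF/negbT.
by rewrite !mulf_eq0 invr_eq0 !negb_or => /andP[/andP[? ?] ?].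
Qed.

Lemma design1_prTY t y :
  prTY P t y x = Pi t y x * (bernoulli_pmf (p0 mu P) y * fXY y x) / fX P x.
Proof.
have [fX_neq0 prY_neq0 py_neq0] := design1_neq0 y.
have [-> ->] := design_x t y.
by rewrite /fX_Y /prT_XY prYmargE; field; rewrite fX_neq0 prY_neq0 py_neq0.
Qed.

Lemma theta_design1 :
  \sum_(y1 : bool) \sum_(y0 : bool) \sum_(t : bool) q P x y1 y0 t = 1 ->
  0 < prT1 P x < 1 ->
  (forall t, prPO_T P t true x = prPO_T P t false x) ->
  (forall t y, 0 < Pi t y x) -> 0 <= p0 mu P <= 1 ->
  theta P x = rr_weights Pi x (p0 mu P * fXY true x) ((1 - p0 mu P) * fXY false x).
Proof.
move=> mass1 e01 unconf Pi_gt0 p01.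
rewrite /theta !prPO_unconfounded // !prT_split // !design1_prTY /rr_weights /=.
have [fX_neq0 _ p1_neq0] := design1_neq0 true.
field; rewrite fX_neq0 (p1_neq0 : p0 mu P != 0) !gt_eqF //.
all: exact: arm_weight_gt0.
Qed.
End Identification.

Definition indep_law {R : realType} (m : bool -> R) (e : R) (y1 y0 t : bool) : R :=
  bernoulli_pmf (m true) y1 * bernoulli_pmf (m false) y0 * bernoulli_pmf e t.

Lemma indep_law_mass1 {R : realType} (m : bool -> R) (e : R) :
  \sum_(y1 : bool) \sum_(y0 : bool) \sum_(t : bool) indep_law m e y1 y0 t = 1.
Proof. by rewrite /indep_law /bernoulli_pmf !big_bool /=; ring. Qed.

Lemma indep_law_ge0 {R : realType} (m : bool -> R) (e : R) y1 y0 t :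
  (forall u, 0 <= m u <= 1) -> 0 <= e <= 1 -> 0 <= indep_law m e y1 y0 t.
Proof. by move=> m01 e01; rewrite !mulr_ge0 ?bernoulli_pmf_ge0. Qed.

Section IndependentLaw.
Context {d : measure_display} {X : measurableType d} {R : realType}.
Context {P : population X R} {x : X} {m : bool -> R} {e : R}.
Hypothesis q_indep : q P x = indep_law m e.

Lemma prPO_indep t : prPO P t x = m t.
Proof.
by rewrite /prPO /pr_x q_indep /indep_law /bernoulli_pmf !big_bool; case: t => /=; ring.
Qed.

Lemma prT1_indep : prT1 P x = e.
Proof. by rewrite /prT1 /pr_x q_indep /indep_law /bernoulli_pmf !big_bool /=; ring. Qed.

Lemma prTY_indep t y : prTY P t y x = bernoulli_pmf e t * bernoulli_pmf (m t) y.
Proof.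
rewrite /prTY /pr_x q_indep /indep_law /bernoulli_pmf !big_bool.
by case: t; case: y => /=; ring.
Qed.

Lemma prPO_T_indep t s : bernoulli_pmf e s != 0 -> prPO_T P t s x = m t.
Proof.
have num : pr_x P x (fun y1 y0 t' => (t' == s) && (if t then y1 else y0)) =
    bernoulli_pmf e s * m t.
  rewrite /pr_x q_indep /indep_law /bernoulli_pmf !big_bool.
  by case: t; case: s => /=; ring.
have den u : pr_x P x (fun _ _ t' => t' == u) = bernoulli_pmf e u.
  by rewrite /pr_x q_indep /indep_law /bernoulli_pmf !big_bool; case: u => /=; ring.
by rewrite /prPO_T num den => es_neq0; rewrite mulrC mulKf.
Qed.
End IndependentLaw.

Section SharpPopulation.
Context {d : measure_display} {X : measurableType d} {R : realType}.
Variables (mu : {measure set X -> \bar R}) (fXY : bool -> X -> R).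
Variables (pi : bool -> bool -> X -> R) (s : R).

Definition class_weight (y : bool) (x : X) : R := bernoulli_pmf s y * fXY y x.

Definition arm_share (t : bool) (x : X) : R :=
  share (pi t true x * class_weight true x) (pi t false x * class_weight false x).

Definition treat_share (x : X) : R :=
  share (pi true true x * class_weight true x + pi true false x * class_weight false x)
        (pi false true x * class_weight true x + pi false false x * class_weight false x).

(* Given X = x, the treatment and both potential outcomes are independent; the shares are
   chosen so that (T, Y) given X = x has joint law proportional to pi(t | y, x) w_y. Off the
   support all weights vanish, the shares are 0 / 0 = 0, and the law is a point mass. *)
Definition sharp_pop : population X R :=
  Population (fun x => class_weight true x + class_weight false x)
             (fun x => indep_law (arm_share^~ x) (treat_share x)).

Lemma q_sharp_pop x : q sharp_pop x = indep_law (arm_share^~ x) (treat_share x).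
Proof. by []. Qed.

Hypotheses (s01 : 0 < s < 1) (fXY_ge0 : forall y x, 0 <= fXY y x)
  (mfXY : forall y, measurable_fun setT (fXY y))
  (int_fXY : forall y, (\int[mu]_x (fXY y x)%:E = 1)%E)
  (supp_fXY : supp (fXY true) = supp (fXY false))
  (pi_ge0 : forall t y x, 0 <= pi t y x)
  (mpi : forall t y, measurable_fun setT (pi t y))
  (pi_gt0 : forall t y x, 0 < fXY true x -> 0 < pi t y x)
  (pi_sum1 : forall y x, 0 < fXY true x -> pi true y x + pi false y x = 1).

Let s_ge0_le1 : 0 <= s <= 1.
Proof. by case/andP: s01 => *; rewrite !ltW. Qed.

Lemma class_weight_ge0 y x : 0 <= class_weight y x.
Proof. by rewrite mulr_ge0 ?bernoulli_pmf_ge0. Qed.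

Lemma common_supp_gt0 y x : 0 < fXY true x -> 0 < fXY y x.
Proof. by case: y => // f1_gt0; have : supp (fXY true) x := f1_gt0; rewrite supp_fXY. Qed.

Lemma class_weight_gt0 y x : 0 < fXY true x -> 0 < class_weight y x.
Proof.
move=> /(common_supp_gt0 y) f_gt0; rewrite mulr_gt0 //.
by case/andP: s01; rewrite /bernoulli_pmf; case: (y) => // _; rewrite subr_gt0.
Qed.

Lemma class_weight_eq0 y x : ~~ (0 < fXY true x) -> class_weight y x = 0.
Proof.
move=> f1_le0; suff f_eq0 : fXY y x = 0 by rewrite /class_weight f_eq0 mulr0.
apply/eqP; rewrite eq_le fXY_ge0 andbT leNgt; apply: contra f1_le0.
by case: y => // f0_gt0; have : supp (fXY false) x := f0_gt0; rewrite -supp_fXY.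
Qed.

Lemma fX_sharp_pop_gt0 x : (0 < fX sharp_pop x) = (0 < fXY true x).
Proof.
have [f1_gt0|f1_le0] := boolP (0 < fXY true x); first by rewrite addr_gt0 ?class_weight_gt0.
by rewrite /= !class_weight_eq0 // addr0 ltxx.
Qed.

Lemma sharp_prTY t y x : 0 < fXY true x ->
  prTY sharp_pop t y x = pi t y x * class_weight y x / fX sharp_pop x.
Proof.
move=> f1_gt0; have w_gt0 u := class_weight_gt0 u x f1_gt0.
have pi_pos u v := pi_gt0 u v x f1_gt0.
rewrite (prTY_indep (q_sharp_pop x)).
have J_gt0 u v : 0 < pi u v x * class_weight v x by rewrite mulr_gt0.
have total : pi true true x * class_weight true x + pi true false x * class_weight false x +
    (pi false true x * class_weight true x + pi false false x * class_weight false x) =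
    fX sharp_pop x.
  by rewrite /= addrACA -!mulrDl !pi_sum1 // !mul1r.
rewrite /treat_share /arm_share !bernoulli_pmf_share ?gt_eqF ?addr_gt0 //= total.
by case: t; case: y => /=; field; rewrite ?gt_eqF ?addr_gt0.
Qed.

Lemma sharp_prY y x : 0 < fXY true x ->
  prY sharp_pop y x = class_weight y x / fX sharp_pop x.
Proof. by move=> f1_gt0; rewrite prY_split !sharp_prTY // -!mulrDl pi_sum1 // mul1r. Qed.

Lemma sharp_p0 : p0 mu sharp_pop = s.
Proof.
have joint x : fX sharp_pop x * prY sharp_pop true x = class_weight true x.
  have [f1_gt0|f1_le0] := boolP (0 < fXY true x).
    by rewrite sharp_prY // mulrC divfK // gt_eqF // fX_sharp_pop_gt0.
  by rewrite /= !class_weight_eq0 // add0r mul0r.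
rewrite /p0; under eq_integral do rewrite joint.
by rewrite integral_scaled_density // ltW //; case/andP: s01.
Qed.

Lemma measurable_class_weight y : measurable_fun setT (class_weight y).
Proof. exact: measurable_funM. Qed.

Lemma integral_fX_sharp_pop : (\int[mu]_x (fX sharp_pop x)%:E = 1)%E.
Proof.
have [s_ge0 s_le1] := andP s_ge0_le1.
rewrite /= (eq_integral (fun x => (class_weight true x)%:E + (class_weight false x)%:E)%E) //.
rewrite ge0_integralD //; try by move=> x _; rewrite lee_fin class_weight_ge0.
- by rewrite !integral_scaled_density //= ?subr_ge0 // -EFinD subrKC.
- exact/measurable_EFinP/measurable_class_weight.
- exact/measurable_EFinP/measurable_class_weight.
Qed.

Lemma sharp_pop_valid : valid_pop mu sharp_pop.
Proof.
have mJ u v : measurable_fun setT (fun x => pi u v x * class_weight v x).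
  exact/measurable_funM/measurable_class_weight.
have m_share u : measurable_fun setT (arm_share u) by exact: measurable_share.
have m_treat : measurable_fun setT treat_share.
  by apply: measurable_share; apply: measurable_funD.
split; first exact/measurable_funD/measurable_class_weight/measurable_class_weight.
split; first by move=> x; rewrite addr_ge0 ?class_weight_ge0.
split; first exact: integral_fX_sharp_pop.
split.
  move=> y1 y0 t; rewrite /= /indep_law.
  apply: measurable_funM; first apply: measurable_funM.
  - exact: measurableT_comp (measurable_bernoulli_pmf y1) (m_share true).
  - exact: measurableT_comp (measurable_bernoulli_pmf y0) (m_share false).
  - exact: measurableT_comp (measurable_bernoulli_pmf t) m_treat.
split; last by move=> x; exact: indep_law_mass1.
move=> x y1 y0 t.
have J_ge0 u v : 0 <= pi u v x * class_weight v x by rewrite mulr_ge0 ?pi_ge0 ?class_weight_ge0.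
apply: indep_law_ge0 => [u|]; apply: share_ge0_le1; by [|apply: addr_ge0].
Qed.

Lemma theta_sharp_pop x : 0 < fXY true x ->
  theta sharp_pop x = rr_weights pi x (s * fXY true x) ((1 - s) * fXY false x).
Proof.
move=> f1_gt0; have w_gt0 u := class_weight_gt0 u x f1_gt0.
have J_gt0 u v : 0 < pi u v x * class_weight v x by rewrite mulr_gt0 ?pi_gt0.
have arm_gt0 u : 0 < pi u true x * (s * fXY true x) + pi u false x * ((1 - s) * fXY false x).
  exact: addr_gt0 (J_gt0 u true) (J_gt0 u false).
have s_gt0 : 0 < s by case/andP: s01.
rewrite /theta !(prPO_indep (q_sharp_pop x)).
rewrite /= /arm_share /share /rr_weights /class_weight /bernoulli_pmf.
by field; rewrite !gt_eqF ?arm_gt0 ?pi_gt0.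
Qed.

Lemma supp_fX_sharp_pop : supp (fX sharp_pop) = supp (fXY true).
Proof. by apply/seteqP; split => x; rewrite /supp /mkset fX_sharp_pop_gt0. Qed.

Lemma sharp_pop_admissible (Pi : bool -> bool -> X -> R) (pbar : R) : s <= pbar ->
  (forall t y x, 0 < fXY true x -> Pi t y x = pi t y x) ->
  admissible mu fXY Pi pbar sharp_pop.
Proof.
move=> s_le_pbar Pi_pi.
have shares01 x : 0 < fXY true x ->
    0 < treat_share x < 1 /\ forall u, 0 < arm_share u x < 1.
  move=> f1_gt0; have J_gt0 u v : 0 < pi u v x * class_weight v x.
    by rewrite mulr_gt0 ?pi_gt0 ?class_weight_gt0.
  by split => [|u]; apply: share_gt0_lt1; rewrite ?addr_gt0.
split; first exact: sharp_pop_valid.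
split; first by rewrite /common_support supp_fX_sharp_pop supp_fXY.
split.
  move=> t x /[!supp_fX_sharp_pop] /shares01[e01 m01].
  by rewrite (prPO_indep (q_sharp_pop x)) (prT1_indep (q_sharp_pop x)).
split.
  move=> t x /[!supp_fX_sharp_pop] /shares01[/andP[e_gt0 e_lt1] _].
  by rewrite !(prPO_T_indep (q_sharp_pop x)) //= gt_eqF // subr_gt0.
split; last by rewrite sharp_p0 s_le_pbar ltW //; case/andP: s01.
move=> t x y /[!supp_fX_sharp_pop] f1_gt0.
have fX_neq0 : fX sharp_pop x != 0 by rewrite gt_eqF // fX_sharp_pop_gt0.
have w_neq0 : class_weight y x != 0 by rewrite gt_eqF // class_weight_gt0.
have b_neq0 : bernoulli_pmf s y != 0.
  by case/andP: s01; rewrite /bernoulli_pmf; case: (y) => s_gt0 s_lt1; rewrite gt_eqF ?subr_gt0.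
split.
  by rewrite /fX_Y prYmargE sharp_p0 sharp_prY // /class_weight; field; rewrite fX_neq0 b_neq0.
by rewrite /prT_XY sharp_prTY // sharp_prY // Pi_pi //; field; rewrite fX_neq0 w_neq0.
Qed.
End SharpPopulation.

Section Admissible.
Context {d : measure_display} {X : measurableType d} {R : realType}.
Context {mu : {measure set X -> \bar R}} {fXY : bool -> X -> R} {Pi : bool -> bool -> X -> R}.
Context {pbar : R} {P : population X R}.
Hypotheses (pbar_le1 : pbar <= 1) (fXY_ge0 : forall y x, 0 <= fXY y x)
  (mfXY : forall y, measurable_fun setT (fXY y))
  (int_fXY : forall y, (\int[mu]_x (fXY y x)%:E = 1)%E)
  (Pi_ge0 : forall t y x, 0 <= Pi t y x)
  (Pi_sum1 : forall y x, Pi true y x + Pi false y x = 1)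
  (Pi_neq0 : forall t y x, supp (fX P) x -> Pi t y x != 0)
  (adm : admissible mu fXY Pi pbar P).

Let supp_fX_fXY y : supp (fX P) = supp (fXY y).
Proof. by case: adm => _ [[? ?] _]; case: y. Qed.

Lemma admissible_fXY_gt0 {x} : supp (fX P) x -> forall y, 0 < fXY y x.
Proof. by move=> Sx y; move: Sx; rewrite (supp_fX_fXY y). Qed.

Lemma admissible_Pi_gt0 {x} : supp (fX P) x -> forall t y, 0 < Pi t y x.
Proof. by move=> Sx t y; rewrite lt0r Pi_neq0 ?Pi_ge0. Qed.

Let design_x {x} : supp (fX P) x ->
  forall t y, fXY y x = fX_Y mu P y x /\ Pi t y x = prT_XY P t y x.
Proof. by case: adm => _ [_ [_ [_ [des _]]]] Sx t y; exact: des. Qed.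

Lemma p0_admissible_gt0_lt1 {x} : supp (fX P) x -> 0 < p0 mu P < 1.
Proof.
move=> Sx; have [_ [_ [_ [_ [_ /andP[p0_ge0 p0_le]]]]]] := adm.
have [_ _ p1_neq0] := design1_neq0 (design_x Sx) (admissible_fXY_gt0 Sx) true.
have [_ _ p0_neq0] := design1_neq0 (design_x Sx) (admissible_fXY_gt0 Sx) false.
rewrite lt0r p1_neq0 p0_ge0 /= lt_neqAle (le_trans p0_le pbar_le1) andbT.
by move: p0_neq0; rewrite /bernoulli_pmf subr_eq0 eq_sym.
Qed.

Lemma theta_admissible {x} : supp (fX P) x ->
  theta P x = rr_weights Pi x (p0 mu P * fXY true x) ((1 - p0 mu P) * fXY false x).
Proof.
move=> Sx; have [[_ [_ [_ [_ [_ mass1]]]]] [_ [ov [unconf _]]]] := adm.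
apply: theta_design1 => //.
- exact: design_x.
- exact: admissible_fXY_gt0.
- exact: (ov true x Sx).2.
- by move=> t; exact: unconf.
- exact: admissible_Pi_gt0.
- by have /andP[p0_gt0 p0_lt1] := p0_admissible_gt0_lt1 Sx; rewrite !ltW.
Qed.

Lemma sharp_pop_of_admissible s : 0 < s < pbar ->
  admissible mu fXY Pi pbar (sharp_pop fXY (prT_XY P) s) /\
  forall x, supp (fX P) x ->
    theta (sharp_pop fXY (prT_XY P) s) x = rr_weights Pi x (s * fXY true x) ((1 - s) * fXY false x).
Proof.
move=> /andP[s_gt0 s_lt_pbar].
have s01 : 0 < s < 1 by rewrite s_gt0 (lt_le_trans s_lt_pbar pbar_le1).
have [[_ [_ [_ [mq [q_ge0 _]]]]] _] := adm.
have supp1 x : 0 < fXY true x -> supp (fX P) x by rewrite (supp_fX_fXY true).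
have Pi_pi t y x : 0 < fXY true x -> Pi t y x = prT_XY P t y x.
  by move=> /supp1 Sx; have [_ ->] := design_x Sx t y.
have pi_ge0 t y x : 0 <= prT_XY P t y x by rewrite divr_ge0 ?pr_x_ge0.
have mpi t y : measurable_fun setT (prT_XY P t y).
  by apply/measurable_funM/measurable_funV; apply: measurable_pr_x.
have supp_eq : supp (fXY true) = supp (fXY false) by rewrite -!supp_fX_fXY.
have pi_gt0 t y x : 0 < fXY true x -> 0 < prT_XY P t y x.
  by move=> f1_gt0; rewrite -Pi_pi //; apply: admissible_Pi_gt0; exact: supp1.
have pi_sum1 y x : 0 < fXY true x -> prT_XY P true y x + prT_XY P false y x = 1.
  by move=> f1_gt0; rewrite -!Pi_pi.
split; first by apply: sharp_pop_admissible => //; rewrite ltW.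
move=> x Sx; have f1_gt0 := admissible_fXY_gt0 Sx true.
by rewrite theta_sharp_pop // /rr_weights -!Pi_pi.
Qed.
End Admissible.

Theorem theorem2 (d : measure_display) (X : measurableType d) (R : realType)
  (mu : {measure set X -> \bar R}) (h0 : R)
  (fXY : bool -> X -> R) (Pi : bool -> bool -> X -> R) (pbar : R)
  (P : population X R) :
  0 < h0 < 1 ->
  pbar <= 1 ->
  (forall y x, 0 <= fXY y x) ->
  (forall y, measurable_fun setT (fXY y)) ->
  (forall y, (\int[mu]_x (fXY y x)%:E)%E = 1%E) ->
  (forall t y x, 0 <= Pi t y x) ->
  (forall y x, Pi true y x + Pi false y x = 1) ->
  (forall t y x, supp (fX P) x -> Pi t y x != 0) ->
  admissible mu fXY Pi pbar P ->
  forall x, supp (fX P) x ->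
    (Num.min (Gamma h0 fXY Pi x 0) (Gamma h0 fXY Pi x pbar) <= theta P x
       <= Num.max (Gamma h0 fXY Pi x 0) (Gamma h0 fXY Pi x pbar))
    /\
    (forall L U : R,
       (forall P' : population X R, admissible mu fXY Pi pbar P' ->
          L <= theta P' x <= U) ->
       L <= Num.min (Gamma h0 fXY Pi x 0) (Gamma h0 fXY Pi x pbar) /\
       Num.max (Gamma h0 fXY Pi x 0) (Gamma h0 fXY Pi x pbar) <= U).
Proof.
move=> h01 pbar_le1 fXY_ge0 mfXY int_fXY Pi_ge0 Pi_sum1 Pi_neq0 adm x Sx.
have fXY_gt0 := admissible_fXY_gt0 adm Sx.
have Pi_gt0 := admissible_Pi_gt0 Pi_ge0 Pi_neq0 Sx.
have /andP[p0_gt0 _] := p0_admissible_gt0_lt1 pbar_le1 adm Sx.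
have [_ [_ [_ [_ [_ /andP[_ p0_le_pbar]]]]]] := adm.
have pbar_gt0 : 0 < pbar := lt_le_trans p0_gt0 p0_le_pbar.
have le1 p : 0 <= p <= pbar -> 0 <= p <= 1.
  by case/andP=> p_ge0 p_le; rewrite p_ge0 (le_trans p_le pbar_le1).
rewrite !Gamma_linfrac ?le1 ?lexx ?(ltW pbar_gt0) //; split.
  rewrite (theta_admissible pbar_le1 Pi_ge0 Pi_neq0 adm Sx) rr_weights_linfrac.
  by apply: linfrac_between => [p /le1|]; [apply: rr_weights_den_gt0 | rewrite ltW].
move=> L U theta_in; apply: linfrac_closure => [p /le1|//|p p_in].
  exact: rr_weights_den_gt0.
have [adm_p theta_p] := sharp_pop_of_admissible pbar_le1 fXY_ge0 mfXY int_fXY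
  Pi_ge0 Pi_sum1 Pi_neq0 adm _ p_in.
by rewrite -rr_weights_linfrac -theta_p //; exact: theta_in _ adm_p.
Qed.
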